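(* For every positive integer $m$, \[ {}_{H}w_{m}(x)=(1+x-m)\,w_{m-1}(x)+(1+x)\sum_{k=1}^{m-1}\binom{m}{k}w_{k-1}(x)\,w_{m-k}(x). \]
   Context: $\genfrac{\{}{\}}{0pt}{}{n}{k}$ denotes the Stirling numbers of the second kind. The geometric polynomials are $w_n(x)=\sum_{k=0}^{n}\genfrac{\{}{\}}{0pt}{}{n}{k}k!\,x^k$ (so $w_0(x)=1$). With $H_k=\sum_{i=1}^k 1/i$, the harmonic geometric polynomials are ${}_{H}w_n(x)=\sum_{k=1}^{n}\genfrac{\{}{\}}{0pt}{}{n}{k}k!\,H_k\,x^k$. *)

From mathcomp Require Import all_boot all_order all_algebra.
Unset Printing Implicit Defensive.
Import GRing.Theory Num.Theory.
Local Open Scope ring_scope.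

Fixpoint stirling2 (n k : nat) : nat :=
  match n, k with
  | 0, 0 => 1
  | 0, _.+1 => 0
  | _.+1, 0 => 0
  | n'.+1, k'.+1 => (k'.+1 * stirling2 n' k'.+1 + stirling2 n' k')%N
  end.

Definition harmonic (R : numFieldType) (k : nat) : R :=
  \sum_(1 <= i < k.+1) (i%:R)^-1.

Definition geom_poly (R : numFieldType) (n : nat) (x : R) : R :=
  \sum_(0 <= k < n.+1) (stirling2 n k * k`!)%:R * x ^+ k.

Definition harm_geom_poly (R : numFieldType) (n : nat) (x : R) : R :=
  \sum_(1 <= k < n.+1) (stirling2 n k * k`!)%:R * harmonic R k * x ^+ k.

(* Write surj(n, k) = k! {n k}, the number of surjections of an n-set onto a
   k-set.  Its exponential generating function in n is (e^t - 1)^k, so surj is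
   multiplicative under binomial convolution:
     sum_j C(n, j) surj(j, a) surj(n - j, b) = surj(n, a + b).
   Since H_k x^k = sum_(a <= k) (x^a / a) x^(k - a), this turns Hw_m into the
   binomial convolution sum_j C(m, j) l_j w_(m - j), where
   l_j = sum_a surj(j, a) x^a / a.  The recurrence surj(j + 1, a) = a (surj(j, a) +
   surj(j, a - 1)) gives l_0 = 0 and l_(j + 1) = (1 + x) w_j - [j = 0], and
   substituting these yields the formula. *)

From mathcomp Require Import all_boot all_order all_algebra.
From mathcomp Require Import ring.

Set Implicit Arguments.
Unset Strict Implicit.
Unset Printing Implicit Defensive.

Import GRing.Theory Num.Theory.
Local Open Scope ring_scope.

Definition surj (n k : nat) : nat := (stirling2 n k * k`!)%N.

Lemma stirling2_small n k : (n < k)%N -> stirling2 n k = 0%N.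
Proof.
by elim: n k => [|n IHn] [|k] //= ltnk; rewrite !IHn ?muln0 //; exact: ltnW.
Qed.

Lemma surj_small n k : (n < k)%N -> surj n k = 0%N.
Proof. by move=> ltnk; rewrite /surj stirling2_small. Qed.

Lemma surj_n0 n : surj n 0 = (n == 0%N).
Proof. by case: n. Qed.

Lemma surjS n k : surj n.+1 k = (k * (surj n k + surj n k.-1))%N.
Proof. by case: k => [|k] //; rewrite /surj /= factS; ring. Qed.

Lemma sum_binomialS (f : nat -> nat -> nat) n :
  (\sum_(0 <= k < n.+2) 'C(n.+1, k) * f k (n.+1 - k) =
   \sum_(0 <= k < n.+1) 'C(n, k) * (f k (n.+1 - k) + f k.+1 (n - k)))%N.
Proof.
rewrite big_nat_recl // bin0 subn0.
under eq_bigr do rewrite binS mulnDl subSS.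
under [in RHS]eq_bigr do rewrite mulnDr.
rewrite !big_split /= [in RHS]big_nat_recl // bin0 subn0.
rewrite [X in (_ + (X + _))%N]big_nat_recr //= bin_small // mul0n addn0.
under [X in (_ = (_ + X) + _)%N]eq_bigr do rewrite subSS.
by rewrite addnA.
Qed.

Lemma surj_binomial_conv n a b :
  (\sum_(0 <= k < n.+1) 'C(n, k) * (surj k a * surj (n - k) b) = surj n (a + b))%N.
Proof.
elim: n a b => [|n IHn] a b; first by rewrite big_nat1 /surj; case: a; case: b.
rewrite (sum_binomialS (fun k l => surj k a * surj l b)%N).
rewrite (eq_big_nat _ _ (F2 := fun k =>
   b * ('C(n, k) * (surj k a * surj (n - k) b))
   + b * ('C(n, k) * (surj k a * surj (n - k) b.-1))
   + (a * ('C(n, k) * (surj k a * surj (n - k) b))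
   + a * ('C(n, k) * (surj k a.-1 * surj (n - k) b))))%N); last first.
  by move=> k /andP[_]; rewrite ltnS => lekn; rewrite (subSn lekn) !surjS; ring.
rewrite !big_split -!big_distrr /= !IHn surjS.
have -> : (b * surj n (a + b.-1) = b * surj n (a + b).-1)%N by case: b => // b; rewrite addnS.
have -> : (a * surj n (a.-1 + b) = a * surj n (a + b).-1)%N by case: a.
ring.
Qed.

Lemma sum_widen_vanishing (V : nmodType) (F : nat -> V) a n N :
  (n <= N)%N -> (forall k, (n <= k)%N -> F k = 0) ->
  \sum_(a <= k < N) F k = \sum_(a <= k < n) F k.
Proof.
move=> lenN Fvan; rewrite [RHS](big_nat_widen _ _ N) // [RHS]big_mkcond /=.
by apply: eq_bigr => k _; case: ltnP => // lenk; rewrite Fvan.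
Qed.

Lemma sum_shift_vanishing (V : nmodType) (F : nat -> V) a n :
  (forall k, (n <= k)%N -> F k = 0) ->
  \sum_(0 <= b < n) F (a + b)%N = \sum_(a <= k < n) F k.
Proof.
move=> Fvan; rewrite -(sum_widen_vanishing a (leq_addl a n) Fvan).
have := big_addn 0 (a + n) a xpredT F; rewrite add0n addKn => ->.
by apply: eq_bigr => b _; rewrite addnC.
Qed.

Section GeometricPolynomials.
Variables (R : numFieldType) (x : R).
Local Notation w n := (geom_poly R n x).
Local Notation Hw n := (harm_geom_poly R n x).

Lemma geom_polyE n : w n = \sum_(0 <= k < n.+1) (surj n k)%:R * x ^+ k.
Proof. by []. Qed.

Lemma geom_poly0 : w 0 = 1.
Proof. by rewrite geom_polyE big_nat1 mulr1. Qed.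

Lemma sum_surj_widen n N (f : nat -> R) : (n <= N)%N ->
  \sum_(0 <= k < n.+1) (surj n k)%:R * f k = \sum_(0 <= k < N.+1) (surj n k)%:R * f k.
Proof.
move=> lenN; apply/esym/sum_widen_vanishing => // k ltnk.
by rewrite surj_small // mul0r.
Qed.

(* [geom_int j] is the integral from 0 to x of (w_j(t) - w_j(0)) / t; its
   [k = 0] term vanishes because [0^-1 = 0]. *)
Definition geom_int j := \sum_(0 <= k < j.+1) (surj j k)%:R * (k%:R^-1 * x ^+ k).

Lemma geom_int0 : geom_int 0 = 0.
Proof. by rewrite /geom_int big_nat1 invr0 mul0r mulr0. Qed.

Lemma geom_intS j : geom_int j.+1 = (1 + x) * w j - (j == 0%N)%:R.
Proof.
have surjS_div k : (surj j.+1 k.+1)%:R * k.+1%:R^-1 = (surj j k.+1 + surj j k)%:R :> R.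
  by rewrite surjS natrM mulrAC divff ?mul1r // pnatr_eq0.
rewrite /geom_int big_nat_recl // invr0 mul0r add0r.
under eq_bigr do rewrite mulrA surjS_div natrD mulrDl.
rewrite big_split /= mulrDl mul1r addrAC; congr (_ + _).
  rewrite geom_polyE (sum_surj_widen _ (leqnSn j)) [in RHS]big_nat_recl //.
  by rewrite surj_n0 expr0 mulr1 addrC addKr.
by rewrite geom_polyE mulr_sumr; apply: eq_bigr => k _; rewrite exprS mulrCA.
Qed.

(* The extra [i = 0] term is [0^-1 = 0]. *)
Lemma harmonicE k : harmonic R k = \sum_(0 <= i < k.+1) i%:R^-1.
Proof. by rewrite /harmonic big_add1 big_nat_recl // invr0 add0r. Qed.

Lemma harm_geom_poly_shift m : Hw m =
  \sum_(0 <= a < m.+1) a%:R^-1 * \sum_(0 <= b < m.+1) (surj m (a + b))%:R * x ^+ (a + b).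
Proof.
have Fvan k : (m.+1 <= k)%N -> (surj m k)%:R * x ^+ k = 0.
  by move=> ltmk; rewrite surj_small // mul0r.
under [RHS]eq_bigr do rewrite (sum_shift_vanishing _ Fvan).
under [RHS]eq_bigr do rewrite (@big_nat_widenl _ _ _ _ 0) // mulr_sumr.
rewrite (exchange_big_dep_nat xpredT) //=.
rewrite (eq_big_nat _ _ (F2 := fun k => (surj m k)%:R * harmonic R k * x ^+ k)); last first.
  move=> k /andP[_ ltkm].
  by rewrite -big_distrl /= harmonicE (big_nat_widen _ _ _ _ _ ltkm) mulrCA mulrA.
have harmonic0 : harmonic R 0 = 0 by rewrite /harmonic big_geq.
by rewrite [RHS]big_nat_recl // harmonic0 mulr0 mul0r add0r /harm_geom_poly big_add1.
Qed.

Lemma harm_geom_poly_conv m :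
  Hw m = \sum_(0 <= j < m.+1) 'C(m, j)%:R * geom_int j * w (m - j).
Proof.
rewrite harm_geom_poly_shift.
transitivity (\sum_(0 <= j < m.+1) \sum_(0 <= a < m.+1) \sum_(0 <= b < m.+1)
    ('C(m, j) * (surj j a * surj (m - j) b))%:R * (a%:R^-1 * x ^+ (a + b))); last first.
  apply: eq_big_nat => j /andP[_]; rewrite ltnS => lejm.
  rewrite /geom_int geom_polyE (sum_surj_widen _ lejm) (sum_surj_widen _ (leq_subr j m)).
  rewrite -mulrA mulr_suml mulr_sumr; apply: eq_bigr => a _.
  rewrite mulr_sumr mulr_sumr; apply: eq_bigr => b _.
  by rewrite !natrM exprD; ring.
rewrite exchange_big_nat; apply: eq_bigr => a _.
rewrite exchange_big_nat mulr_sumr; apply: eq_bigr => b _.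
by rewrite -big_distrl -natr_sum surj_binomial_conv mulrCA.
Qed.

Lemma harm_geom_polyS n : Hw n.+1 =
  (1 + x) * \sum_(0 <= i < n.+1) 'C(n.+1, i.+1)%:R * w i * w (n - i) - n.+1%:R * w n.
Proof.
rewrite harm_geom_poly_conv big_nat_recl // geom_int0 mulr0 mul0r add0r.
under eq_bigr do rewrite geom_intS subSS mulrBr mulrBl.
rewrite sumrB mulr_sumr; congr (_ - _).
  by apply: eq_bigr => i _; ring.
by rewrite big_nat_recl // big1 => [|i _]; rewrite ?bin1 ?subn0 ?mulr1 ?addr0 // mulr0 mul0r.
Qed.

End GeometricPolynomials.

Theorem theorem2 (R : numFieldType) (m : nat) (x : R) : (0 < m)%N ->
  harm_geom_poly R m x =
    (1 + x - m%:R) * geom_poly R m.-1 x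
    + (1 + x) * \sum_(1 <= k < m) 'C(m, k)%:R * geom_poly R k.-1 x * geom_poly R (m - k) x.
Proof.
case: m => // n _.
rewrite harm_geom_polyS big_nat_recr //= subnn binn geom_poly0 big_add1 /=.
under [in RHS]eq_bigr do rewrite subSS.
ring.
Qed.
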